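(* Let $\alpha,\beta\in\mathbb{R}$ satisfy $\alpha^2>4$ and $\beta>0$, and let $q_{\alpha,\beta}(w)=w^4+\alpha w^3+(\beta-4)w^2-\alpha w+3$ for $w\in\mathbb{C}$. Then $q_{\alpha,\beta}$ has exactly $2$ roots in the open unit disk $U_1(0)=\{w\in\mathbb{C}:|w|<1\}$, counted with multiplicity. *)

From HB Require Import structures.
From mathcomp Require Import all_boot all_order all_algebra.
From mathcomp Require Import complex.
From mathcomp Require Import reals.
Set Implicit Arguments. Unset Strict Implicit. Unset Printing Implicit Defensive.
Import Order.TTheory GRing.Theory Num.Theory.
Local Open Scope ring_scope.

Definition q_ab (R : realType) (alpha beta : R) : {poly R[i]} :=
  'X^4 + (alpha%:C)%C *: 'X^3 + ((beta - 4)%:C)%C *: 'X^2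
  - (alpha%:C)%C *: 'X + 3%:P.

Definition roots_in_unit_disk_count (R : realType) (p : {poly R[i]}) (n : nat) : Prop :=
  p != 0 /\ exists s : seq R[i],
    p = lead_coef p *: \prod_(z <- s) ('X - z%:P) /\ count (fun z => `|z| < 1) s = n.

From mathcomp Require Import all_boot all_order all_algebra.
From mathcomp Require Import complex reals.
From mathcomp Require Import ring lra.
Set Implicit Arguments. Unset Strict Implicit. Unset Printing Implicit Defensive.
Import Order.TTheory GRing.Theory Num.Theory.
Local Open Scope ring_scope.

(* Matching coefficients, q_{alpha,beta} = (w^2 + a w + b)(w^2 + c w + d) over the reals
   with b d = 3 forces a = -k (1 + b), c = k (1 + 3/b), where k = alpha b / (3 - b^2),
   and the w^2 coefficient turns into a polynomial equation G(b) = 0 with G(0) < 0 < G(1);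
   beta > 0 then gives k^2 < 1.  By the Schur-Cohn conditions (0 < b < 1 and |a| < 1 + b)
   the first factor has both roots in the unit disk, and the same conditions applied to the
   reciprocal of the second factor put both of its roots outside. *)

Section RealQuadratics.
Variable R : rcfType.

Lemma normc_lt1 (x y : R) : (`|(x +i* y)%C| < 1) = (x^+2 + y^+2 < 1).
Proof.
rewrite normc_def -[1 : R[i]]/((1:R)%:C)%C ltcR.
by rewrite -[X in _ < X]sqrtr1 ltr_sqrt ?ltr01.
Qed.

Lemma quadratic_roots_in_unit_disk (a b : R) :
  0 < b < 1 -> a^+2 < (1 + b)^+2 -> exists z1 z2 : R[i],
  [/\ z1 + z2 = (-a)%:C, z1 * z2 = b%:C, `|z1| < 1 & `|z2| < 1]%C.
Proof.
move=> /andP[b_gt0 b_lt1] a_small.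
have a_gt : -(1 + b) < a by nra.
have a_lt : a < 1 + b by nra.
have [disc_ge0|disc_lt0] := leP 0 (a^+2 - 4 * b).
- pose s : R := Num.sqrt (a^+2 - 4 * b).
  have s_ge0 : 0 <= s by rewrite sqrtr_ge0.
  have s2 : s^+2 = a^+2 - 4 * b by rewrite sqr_sqrtr.
  have s_lt1 : s < 2 + a by nra.
  have s_lt2 : s < 2 - a by nra.
  exists ((-a + s) / 2)%:C%C, ((-a - s) / 2)%:C%C.
  rewrite -!rmorphD -!rmorphM -!complexr0 !normc_lt1 expr0n addr0 addr0.
  split; [by congr _%:C%C; field | congr _%:C%C | nra | nra].
  have -> : (-a + s) / 2 * ((-a - s) / 2) = (a^+2 - s^+2) / 4 by field.
  by rewrite s2; field.
- pose t : R := Num.sqrt (4 * b - a^+2) / 2.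
  have t2 : t^+2 = b - a^+2 / 4 by rewrite expr_div_n sqr_sqrtr; [field | lra].
  exists (- a / 2 +i* t)%C, (- a / 2 +i* - t)%C.
  split; rewrite ?normc_lt1.
  + by apply/eqP; rewrite eq_complex /= subrr eqxx andbT -splitr.
  + apply/eqP; rewrite eq_complex /= mulrN opprK -!expr2 t2.
    by apply/andP; split; apply/eqP; field.
  + by rewrite t2; lra.
  + by rewrite sqrrN t2; lra.
Qed.

Lemma quadratic_roots_outside_unit_disk (c d : R) :
  1 < d -> c^+2 < (1 + d)^+2 -> exists z1 z2 : R[i],
  [/\ z1 + z2 = (-c)%:C, z1 * z2 = d%:C, 1 < `|z1| & 1 < `|z2|]%C.
Proof.
move=> d_gt1 c_small.
have d_gt0 : 0 < d by lra.
have dinv : 0 < d^-1 < 1 by rewrite invr_gt0 invf_lt1 ?d_gt0.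
have cd_small : (c / d)^+2 < (1 + d^-1)^+2.
  have -> : 1 + d^-1 = (1 + d) / d by field; lra.
  by rewrite !expr_div_n ltr_pM2r ?invr_gt0 ?exprn_gt0.
have [u1 [u2 [u_sum u_prod u1_lt1 u2_lt1]]] :=
  quadratic_roots_in_unit_disk dinv cd_small.
have : u1 * u2 != 0 by rewrite u_prod fmorph_eq0 invr_eq0 gt_eqF.
rewrite mulf_eq0 negb_or => /andP[u1_neq0 u2_neq0].
exists u1^-1, u2^-1; split.
- have -> : u1^-1 + u2^-1 = (u1 + u2) / (u1 * u2).
    by rewrite invfM mulrDl mulrA mulfV // mul1r mulrCA mulfV // mulr1 addrC.
  by rewrite u_sum u_prod -fmorph_div; congr _%:C%C; field; lra.
- by rewrite -invfM u_prod -fmorphV invrK.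
- by rewrite normfV invf_gt1 ?normr_gt0.
- by rewrite normfV invf_gt1 ?normr_gt0.
Qed.

Lemma alpha_beta_parametrization (alpha beta : R) :
  4 < alpha^+2 -> 0 < beta -> exists b k : R,
  [/\ 0 < b < 1, k^+2 < 1, alpha = k * (3 - b^+2) / b
    & beta = (1 + b) * (3 + b) * (1 - k^+2) / b].
Proof.
move=> alpha_big beta_gt0.
pose G : {poly R} := beta%:P * 'X * (3%:P - 'X^2)^+2
  - (1%:P + 'X) * (3%:P + 'X) * ((3%:P - 'X^2)^+2 - (alpha^+2)%:P * 'X^2).
have hornerG x : G.[x] = beta * x * (3 - x^+2)^+2
    - (1 + x) * (3 + x) * ((3 - x^+2)^+2 - alpha^+2 * x^+2).
  by rewrite !(hornerD, hornerN, hornerM, hornerC, hornerX, hornerXn, horner_exp).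
have G0 : G.[0] = -27 by rewrite hornerG; ring.
have G1 : G.[1] = 4 * beta + 8 * (alpha^+2 - 4) by rewrite hornerG; ring.
have [b /andP[b_ge0 b_le1] /eqP Gb] : exists2 b, 0 <= b <= 1 & root G b.
  by apply: poly_ivt; rewrite ?ler01 // G0 G1; apply/andP; split; lra.
have b_gt0 : 0 < b.
  by rewrite lt_neqAle b_ge0 andbT; apply/eqP => b0; move: Gb; rewrite -b0 G0; lra.
have b_lt1 : b < 1.
  by rewrite lt_neqAle b_le1 andbT; apply/eqP => b1; move: Gb; rewrite b1 G1; lra.
have b_neq0 : b != 0 by rewrite gt_eqF.
have b3_neq0 : 3 - b^+2 != 0 by rewrite gt_eqF //; nra.
pose k := alpha * b / (3 - b^+2).
have beta_k : beta = (1 + b) * (3 + b) * (1 - k^+2) / b.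
  have -> : (1 + b) * (3 + b) * (1 - k^+2) / b
      = (1 + b) * (3 + b) * ((3 - b^+2)^+2 - alpha^+2 * b^+2) / (b * (3 - b^+2)^+2).
    by rewrite /k; field; rewrite b_neq0 b3_neq0.
  move/eqP: Gb; rewrite hornerG subr_eq0 => /eqP <-; field.
  by rewrite b_neq0 b3_neq0.
exists b, k; split.
- by rewrite b_gt0 b_lt1.
- have : 0 < (1 + b) * (3 + b) / b * (1 - k^+2) by rewrite mulrAC -beta_k.
  by rewrite pmulr_rgt0 ?divr_gt0 //; [lra | nra].
- by rewrite /k; field; rewrite b_neq0 b3_neq0.
- exact: beta_k.
Qed.

Definition real_quadratic (a b : R) : {poly R[i]} :=
  'X^2 + (a%:C)%C%:P * 'X + (b%:C)%C%:P.

Lemma real_quadratic_factor (a b : R) (z1 z2 : R[i]) :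
  z1 + z2 = (-a)%:C%C -> z1 * z2 = b%:C%C ->
  real_quadratic a b = ('X - z1%:P) * ('X - z2%:P).
Proof.
move=> sum prod; rewrite /real_quadratic -prod.
have -> : a%:C%C = - (z1 + z2) by rewrite sum rmorphN opprK.
by rewrite rmorphN rmorphD rmorphM; ring.
Qed.
End RealQuadratics.

Lemma q_ab_factor (R : realType) (alpha beta a b c d : R) :
  alpha = a + c -> beta - 4 = b + d + a * c -> - alpha = a * d + b * c ->
  3 = b * d -> q_ab alpha beta = real_quadratic a b * real_quadratic c d.
Proof.
have expand (X A B C D a' b' c' d' : {poly R[i]}) :
    A = a' + c' -> B = b' + d' + a' * c' -> C = a' * d' + b' * c' -> D = b' * d' ->
    X^+4 + A * X^+3 + B * X^+2 + C * X + D = (X^+2 + a' * X + b') * (X^+2 + c' * X + d').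
  by move=> -> -> -> ->; ring.
move=> coef3 coef2 coef1 coef0; rewrite /q_ab /real_quadratic -!mul_polyC -mulNr.
apply: expand.
- by rewrite coef3 !rmorphD.
- by rewrite coef2 !rmorphD !rmorphM.
- by rewrite -!rmorphN coef1 !rmorphD !rmorphM.
- by rewrite -!rmorphM -coef0 !rmorph_nat.
Qed.

Lemma q_ab_real_quadratic_factors (R : realType) (alpha beta : R) :
  4 < alpha^+2 -> 0 < beta -> exists a b c d : R,
  [/\ 0 < b < 1, a^+2 < (1 + b)^+2, 1 < d, c^+2 < (1 + d)^+2
    & q_ab alpha beta = real_quadratic a b * real_quadratic c d].
Proof.
move=> alpha_big beta_gt0.
have [b [k [b01 k_small -> ->]]] := alpha_beta_parametrization alpha_big beta_gt0.
have /andP[b_gt0 b_lt1] := b01.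
have b_neq0 : b != 0 by rewrite gt_eqF.
have d_gt0 : 0 < 3 / b by rewrite divr_gt0.
exists (- k * (1 + b)), b, (k * (1 + 3 / b)), (3 / b); split => //.
- by rewrite exprMn sqrrN; nra.
- by rewrite ltr_pdivlMr // mul1r; lra.
- by rewrite exprMn; nra.
- by apply: q_ab_factor; field; rewrite ?b_neq0.
Qed.

Theorem mainTheorem1 (R : realType) (alpha beta : R) :
  alpha ^+ 2 > 4 -> beta > 0 -> roots_in_unit_disk_count (q_ab alpha beta) 2.
Proof.
move=> alpha_big beta_gt0.
have [a [b [c [d [b01 a_small d_gt1 c_small ->]]]]] :=
  q_ab_real_quadratic_factors alpha_big beta_gt0.
have [z1 [z2 [sum12 prod12 z1_in z2_in]]] := quadratic_roots_in_unit_disk b01 a_small.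
have [z3 [z4 [sum34 prod34 z3_out z4_out]]] :=
  quadratic_roots_outside_unit_disk d_gt1 c_small.
rewrite (real_quadratic_factor sum12 prod12) (real_quadratic_factor sum34 prod34).
set s := [:: z1; z2; z3; z4].
have -> : ('X - z1%:P) * ('X - z2%:P) * (('X - z3%:P) * ('X - z4%:P))
    = \prod_(z <- s) ('X - z%:P) by rewrite !big_cons big_nil mulr1 !mulrA.
have s_monic : \prod_(z <- s) ('X - z%:P) \is monic := monic_prod_XsubC _ _ _.
split; first exact: monic_neq0.
exists s; split; first by rewrite (monicP s_monic) scale1r.
by rewrite /= z1_in z2_in (lt_gtF z3_out) (lt_gtF z4_out).
Qed.
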